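(* Let $L\in\{A_1,A_2,D_4,E_8\}$ and $m:=\dim L$. For every $n\in N(L):=\{\|z\|_2^m:z\in\overline{L}\setminus\{0\}\}$, there exists a lattice code in $\mathbb{R}^m/L$ of size $n$.
   Context: $A_n$ is the set of points of $\mathbb{Z}^{n+1}$ whose coordinates sum to zero, viewed as a lattice in the hyperplane $\{x\in\mathbb{R}^{n+1}:\sum_i x_i=0\}\cong\mathbb{R}^n$ (with induced Euclidean structure); $D_4$ is the set of points of $\mathbb{Z}^4$ whose coordinates sum to an even number; $E_8$ is the set of points of $\mathbb{Z}^8\cup(\mathbb{Z}+\tfrac12)^8$ whose coordinates sum to an even number. $\ell(L)$ is the smallest Euclidean norm of a nonzero vector of $L$ and $\overline{L}:=\ell(L)^{-1}L$. $\operatorname{CO}(m):=\{cQ:c>0,Q\in\operatorname{O}(m)\}$. A lattice code in $\mathbb{R}^m/L$ is a set $(TL)/L$ where $T\in\operatorname{CO}(m)$ is such that $L\subseteq TL$; its size is the index $|TL:L|$. *)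

From mathcomp Require Import all_boot all_order all_algebra.
From mathcomp Require Import reals.
Set Implicit Arguments. Unset Strict Implicit. Unset Printing Implicit Defensive.
Import Order.TTheory GRing.Theory Num.Theory.
Local Open Scope ring_scope.

Inductive lat := A1 | A2 | D4 | E8.

(* ambient coordinate dimension: A_n lives in R^(n+1) *)
Definition amb (L : lat) : nat :=
  match L with A1 => 2 | A2 => 3 | D4 => 4 | E8 => 8 end.

Definition ldim (L : lat) : nat :=
  match L with A1 => 1 | A2 => 2 | D4 => 4 | E8 => 8 end.

Section Defs.
Variable R : realType.

Definition dotv k (u v : 'rV[R]_k) : R := \sum_(i < k) u ord0 i * v ord0 i.
Definition normv k (u : 'rV[R]_k) : R := Num.sqrt (dotv u u).

Definition coord_sum k (x : 'rV[R]_k) : R := \sum_(i < k) x ord0 i.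

Definition intvec k (x : 'rV[R]_k) : Prop := forall i, x ord0 i \is a Num.int.
Definition halfvec k (x : 'rV[R]_k) : Prop :=
  forall i, x ord0 i - 2^-1 \is a Num.int.

Definition An_set k (x : 'rV[R]_k) : Prop := intvec x /\ coord_sum x = 0.
Definition D4_set (x : 'rV[R]_4) : Prop :=
  intvec x /\ (coord_sum x / 2) \is a Num.int.
Definition E8_set (x : 'rV[R]_8) : Prop :=
  (intvec x \/ halfvec x) /\ (coord_sum x / 2) \is a Num.int.

Definition lat_set (L : lat) : 'rV[R]_(amb L) -> Prop :=
  match L return 'rV[R]_(amb L) -> Prop with
  | A1 => @An_set 2 | A2 => @An_set 3 | D4 => D4_set | E8 => E8_set end.

(* the real span of L (the Euclidean space R^m in which L is a lattice):
   the hyperplane {sum x_i = 0} for A_n, the whole space otherwise *)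
Definition lat_space (L : lat) : 'rV[R]_(amb L) -> Prop :=
  match L return 'rV[R]_(amb L) -> Prop with
  | A1 => fun x => coord_sum x = 0 | A2 => fun x => coord_sum x = 0
  | D4 => fun _ => True | E8 => fun _ => True end.

Definition is_min_norm k (S : 'rV[R]_k -> Prop) (l : R) : Prop :=
  (exists2 z, S z & z != 0 /\ normv z = l) /\
  (forall z, S z -> z != 0 -> l <= normv z).

(* T (acting on row vectors x |-> x *m T) restricted to the space W is in
   CO(W): it maps W into W and scales all inner products by some c > 0 *)
Definition is_CO k (W : 'rV[R]_k -> Prop) (T : 'M[R]_k) : Prop :=
  (forall x, W x -> W (x *m T)) /\
  exists2 c : R, 0 < c &
    forall x y, W x -> W y -> dotv (x *m T) (y *m T) = c * dotv x y.

Definition img k (S : 'rV[R]_k -> Prop) (T : 'M[R]_k) (y : 'rV[R]_k) : Prop :=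
  exists2 x, S x & y = x *m T.

(* the index |M : S| of the subgroup S of M equals n: there are exactly n
   cosets of S in M (a list of n pairwise S-incongruent elements of M
   meeting every coset) *)
Definition index_eq k (M S : 'rV[R]_k -> Prop) (n : nat) : Prop :=
  exists s : seq 'rV[R]_k,
    [/\ size s = n,
        forall i, (i < n)%N -> M (nth 0 s i),
        forall i j, (i < n)%N -> (j < n)%N -> i <> j ->
          ~ S (nth 0 s i - nth 0 s j)
      & forall y, M y -> exists2 i, (i < n)%N & S (y - nth 0 s i)].

(* there is a lattice code (T L)/L in W/L of size n *)
Definition has_lattice_code k (W S : 'rV[R]_k -> Prop) (n : nat) : Prop :=
  exists T : 'M[R]_k,
    [/\ is_CO W T, (forall x, S x -> img S T x) & index_eq (img S T) S n].

End Defs.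

From mathcomp Require Import all_boot all_order all_algebra zify ring lra.
From mathcomp Require Import reals.
Set Implicit Arguments. Unset Strict Implicit. Unset Printing Implicit Defensive.
Import Order.TTheory GRing.Theory Num.Theory.
Local Open Scope ring_scope.

(* Scaled so that their minimal length is [sqrt 2], the four lattices are
   rings whose norm, half the squared length, is multiplicative: the integers,
   the Eisenstein integers, the Hurwitz quaternions and Coxeter's integral
   octonions.  For z in L, multiplication by z maps L into itself and scales
   lengths by |z| / sqrt 2, so the inverse T of this map on the span of L is a
   similarity with L ⊆ T L and |T L : L| = |L : L z| = |det A|, where A is the
   integer matrix of multiplication by z in a basis of L.  Taking determinants
   in 2 A G A^T = |z|^2 G, G the Gram matrix, gives |det A| = (|z| / sqrt 2)^m,
   and the index of Z^m A in Z^m is |det A| by the Smith normal form. *)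

(** * Cosets of integer row lattices *)

Definition int_rowspan m (A : 'M[int]_m) (v : 'rV[int]_m) : Prop :=
  exists u, v = u *m A.

Definition int_coset_reps m (A : 'M[int]_m) (s : seq 'rV[int]_m) : Prop :=
  (forall i j, (i < size s)%N -> (j < size s)%N -> i <> j ->
     ~ int_rowspan A (s`_i - s`_j)) /\
  (forall x, exists2 i, (i < size s)%N & int_rowspan A (x - s`_i)).

Lemma dvdz_subn_small (d : int) (a b : nat) :
  (a < `|d|)%N -> (b < `|d|)%N -> (d %| a%:Z - b%:Z)%Z -> a = b.
Proof.
move=> a_lt b_lt /dvdzP[q E].
have [q0|[q_ge1|q_leN1]] : q = 0 \/ 1 <= q \/ q <= -1 by lia.
- by move/eqP: E; rewrite q0 mul0r subr_eq0 => /eqP[].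
- by case: d a_lt b_lt E => n /= *; nia.
- by case: d a_lt b_lt E => n /= *; nia.
Qed.

Lemma diag_int_coset_reps m (d : 'rV[int]_m) : (forall i, d ord0 i != 0) ->
  exists2 s, size s = (\prod_i `|d ord0 i|)%N & int_coset_reps (diag_mx d) s.
Proof.
move=> d_neq0; pose e i := `|d ord0 i|%N.
have e_gt0 i : (0 < e i)%N by rewrite absz_gt0.
pose fT := {dffun forall i : 'I_m, 'I_(e i)}.
pose rep (f : fT) : 'rV[int]_m := \row_i (f i : nat)%:Z.
have f0 : fT := [ffun i => Ordinal (e_gt0 i)].
exists [seq rep f | f <- enum fT].
  rewrite size_map -cardE card_dep_ffun foldrE big_map big_enum.
  by apply: eq_bigr => i _; rewrite card_ord.
split.
- move=> i j; rewrite size_map => i_lt j_lt; apply: contra_not => -[u].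
  rewrite (nth_map f0 _ _ i_lt) (nth_map f0 _ _ j_lt) mul_mx_diag => E.
  apply/eqP; rewrite -(nth_uniq f0 i_lt j_lt (enum_uniq fT)); apply/eqP/ffunP => k.
  apply/val_inj/(dvdz_subn_small (ltn_ord _) (ltn_ord _))/dvdzP; exists (u ord0 k).
  by have := congr1 (fun v : 'rV_m => v ord0 k) E; rewrite !mxE.
- move=> x.
  have res_lt k : (`|(x ord0 k %% d ord0 k)%Z| < e k)%N.
    by rewrite -ltz_nat gez0_abs ?modz_ge0 ?ltz_mod.
  pose f : fT := [ffun k => Ordinal (res_lt k)].
  exists (index f (enum fT)); first by rewrite size_map index_mem mem_enum.
  rewrite (nth_map f0) ?index_mem ?mem_enum // nth_index ?mem_enum //.
  exists (\row_k (x ord0 k %/ d ord0 k)%Z); apply/rowP => k.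
  rewrite mul_mx_diag !mxE ffunE /= gez0_abs ?modz_ge0 //.
  by rewrite {1}(divz_eq (x ord0 k) (d ord0 k)) addrK.
Qed.

Lemma int_rowspan_unimodular m (L D R : 'M[int]_m) v :
  L \in unitmx -> R \in unitmx ->
  int_rowspan (L *m D *m R) (v *m R) <-> int_rowspan D v.
Proof.
move=> L_unit R_unit; split=> -[u E].
- by exists (u *m L); apply: (can_inj (mulmxK R_unit)); rewrite E !mulmxA.
- by exists (u *m invmx L); rewrite E !mulmxA mulmxKV.
Qed.

Lemma int_coset_reps_unimodular m (L D R : 'M[int]_m) s :
  L \in unitmx -> R \in unitmx -> int_coset_reps D s ->
  int_coset_reps (L *m D *m R) [seq v *m R | v <- s].
Proof.
move=> L_unit R_unit [incongr cover]; rewrite /int_coset_reps size_map; split.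
- move=> i j i_lt j_lt ij; rewrite !(nth_map 0) // -mulmxBl.
  by rewrite int_rowspan_unimodular //; apply: incongr.
- move=> x; have [i i_lt span_i] := cover (x *m invmx R).
  exists i => //; rewrite (nth_map 0) // -[x](mulmxKV R_unit) -mulmxBl.
  by rewrite int_rowspan_unimodular.
Qed.

Lemma unimodular_abs_det m (L : 'M[int]_m) : L \in unitmx -> `|\det L|%N = 1%N.
Proof. by rewrite unitmxE => /orP[] /eqP ->. Qed.

Lemma int_coset_reps_det m (A : 'M[int]_m) : \det A != 0 ->
  exists2 s, size s = `|\det A|%N & int_coset_reps A s.
Proof.
have [L L_unit [R R_unit [d _ ->]]] := int_Smith_normal_form A.
set D := \matrix_(i, j) _.
have -> : D = diag_mx (\row_i d`_i) by apply/matrixP => i j; rewrite !mxE.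
rewrite !det_mulmx det_diag => det_neq0.
have [|s size_s reps] := @diag_int_coset_reps m (\row_i d`_i).
  move=> i; apply: contra_neq det_neq0; rewrite mxE => di0.
  by rewrite (bigD1 i) //= mxE di0 !(mul0r, mulr0).
exists [seq v *m R | v <- s]; last exact: int_coset_reps_unimodular.
rewrite size_map size_s !abszM !unimodular_abs_det // mul1n muln1.
rewrite (big_morph absz (@abszM) (erefl : `|1|%N = 1%N)).
by apply: eq_bigr => i _; rewrite mxE.
Qed.

(* [A u] is the matrix of multiplication by the lattice vector with coordinates
   [u] in a ring structure on the lattice whose norm, half the squared length,
   is multiplicative. *)
Definition norm_multiplicative m (G : 'M[int]_m) (A : 'rV[int]_m -> 'M[int]_m) :=
  forall u, 2 *: (A u *m G *m (A u)^T) = (u *m G *m u^T) ord0 ord0 *: G.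

Lemma norm_multiplicative_det m (G : 'M[int]_m) A u :
  norm_multiplicative G A -> \det G != 0 ->
  \det (A u) ^+ 2 * 2 ^+ m = ((u *m G *m u^T) ord0 ord0) ^+ m.
Proof.
move=> /(_ u) /(congr1 determinant); rewrite !detZ !det_mulmx det_tr => E G_neq0.
by apply: (mulIf G_neq0); rewrite -E; ring.
Qed.

(** * Lattice codes from integral similarities *)

Section LatticeCodes.
Variable R : realType.
Local Notation ZR := (map_mx (intr : int -> R)).

Lemma map_mx_intr_inj m n : injective (ZR : 'M[int]_(m, n) -> 'M[R]_(m, n)).
Proof.
move=> a b E; apply/matrixP => i j.
by have := congr1 (fun M : 'M_(m, n) => M i j) E; rewrite !mxE => /intr_inj.
Qed.

Lemma dotv_mul_tr k (u v : 'rV[R]_k) : dotv u v = (u *m v^T) ord0 ord0.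
Proof. by rewrite /dotv mxE; apply: eq_bigr => i _; rewrite mxE. Qed.

Lemma dotv_eq0 k (x : 'rV[R]_k) : (dotv x x == 0) = (x == 0).
Proof.
apply/idP/eqP => [/eqP x0|->]; last by rewrite /dotv big1 // => i _; rewrite mxE mul0r.
apply/rowP => i; apply/eqP; rewrite mxE -sqrf_eq0 expr2; apply/eqP.
by apply: (psumr_eq0P _ x0) => // j _; rewrite -expr2 sqr_ge0.
Qed.

Lemma gram_det_neq0 k m (B : 'M[R]_(m, k)) Bp : B *m Bp = 1%:M -> \det (B *m B^T) != 0.
Proof.
move=> B_rinv; apply/det0P => -[v v_neq0 vG0].
have vB0 : v *m B = 0.
  by apply/eqP; rewrite -dotv_eq0 dotv_mul_tr trmx_mul !mulmxA -(mulmxA v) vG0 mul0mx mxE.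
by move: v_neq0; rewrite -[v]mulmx1 -B_rinv mulmxA vB0 mul0mx eqxx.
Qed.

Definition int_span k m (B : 'M[R]_(m, k)) (x : 'rV[R]_k) : Prop :=
  exists u : 'rV[int]_m, x = ZR u *m B.

(* [x *m Bp] is the coordinate vector of [x] in [W] with respect to the rows
   of [B]. *)
Definition lattice_basis k m (S W : 'rV[R]_k -> Prop) (B : 'M[R]_(m, k)) Bp :=
  [/\ forall x, S x <-> int_span B x, B *m Bp = 1%:M,
      forall y, W (y *m B) & forall x, W x -> x *m Bp *m B = x].

Section Similarity.
Variables (k m : nat) (S W : 'rV[R]_k -> Prop) (B : 'M[R]_(m, k)) (Bp : 'M[R]_(k, m)).
Hypothesis basisB : lattice_basis S W B Bp.
Variables (A : 'M[int]_m) (c : R).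
Hypotheses (A_det : \det A != 0) (c_gt0 : 0 < c).
Hypothesis A_sim : ZR A *m (B *m B^T) *m (ZR A)^T = c *: (B *m B^T).

Let A_unit : ZR A \in unitmx.
Proof. by rewrite unitmxE det_map_mx unitfE intr_eq0. Qed.

Let V := invmx (ZR A).

(* On the lattice coordinates [T] undoes right multiplication by [A];
   on the kernel of the projection [Bp *m B] onto [W] it is the identity. *)
Let T := Bp *m V *m B + (1%:M - Bp *m B).

Let T_on_W x : W x -> x *m T = x *m Bp *m V *m B.
Proof.
case: basisB => _ _ _ W_proj Wx.
by rewrite mulmxDr mulmxBr mulmx1 !mulmxA W_proj // subrr addr0.
Qed.

Let T_on_span (u : 'rV[int]_m) : ZR u *m B *m T = ZR u *m V *m B.
Proof.
case: basisB => _ B_rinv W_rowB _.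
rewrite T_on_W; last exact: W_rowB.
by rewrite -(mulmxA _ B Bp) B_rinv mulmx1.
Qed.

Let S_inv_span (u : 'rV[int]_m) : S (ZR u *m V *m B) <-> int_rowspan A u.
Proof.
case: basisB => S_span B_rinv _ _; rewrite S_span; split=> -[w E].
- exists w; apply: map_mx_intr_inj.
  move/(congr1 (fun M : 'rV_k => M *m Bp)): E; rewrite -!mulmxA B_rinv !mulmx1 => E.
  by rewrite map_mxM -[ZR u](mulmxKV A_unit) E.
- by exists w; rewrite E map_mxM -(mulmxA (ZR w)) mulmxV ?mulmx1.
Qed.

Lemma similarity_is_CO : is_CO W T.
Proof.
case: basisB => _ _ W_rowB W_proj.
split=> [x Wx|]; first by rewrite T_on_W //; apply: W_rowB.
have inv_sim : V *m (B *m B^T) *m V^T = c^-1 *: (B *m B^T).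
  apply: (@scalerI _ _ c); first by rewrite gt_eqF.
  rewrite scalerA divff ?gt_eqF // scale1r scalemxAl scalemxAr -A_sim !mulmxA mulVmx //.
  by rewrite mul1mx -!mulmxA -trmx_mul mulVmx // trmx1 mulmx1.
exists c^-1; rewrite ?invr_gt0 // => x y Wx Wy.
rewrite !dotv_mul_tr !T_on_W //.
have -> : x *m Bp *m V *m B *m (y *m Bp *m V *m B)^T =
    x *m Bp *m (V *m (B *m B^T) *m V^T) *m (y *m Bp)^T.
  by rewrite !trmx_mul !mulmxA.
rewrite inv_sim -scalemxAr -scalemxAl mxE; congr (_ * _).
by rewrite -[in RHS](W_proj _ Wx) -[in RHS](W_proj _ Wy) !trmx_mul !mulmxA.
Qed.

Lemma lattice_sub_img x : S x -> img S T x.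
Proof.
case: (basisB) => S_span _ _ _ /S_span[u ->].
exists (ZR (u *m A) *m B); first by apply/S_span; exists (u *m A).
by rewrite T_on_span map_mxM -(mulmxA (ZR u)) mulmxV ?mulmx1.
Qed.

Lemma img_index : index_eq (img S T) S `|\det A|%N.
Proof.
case: (basisB) => S_span _ _ _.
have [s size_s [incongr cover]] := int_coset_reps_det A_det.
exists [seq ZR r *m V *m B | r <- s]; rewrite size_map -size_s; split => //.
- move=> i i_lt; rewrite (nth_map 0) //.
  by exists (ZR s`_i *m B); [apply/S_span; exists s`_i | rewrite T_on_span].
- move=> i j i_lt j_lt ij; rewrite !(nth_map 0) // -!mulmxBl -map_mxB S_inv_span.
  exact: incongr.
- move=> _ [_ /S_span[x ->] ->]; have [i i_lt span_i] := cover x.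
  by exists i => //; rewrite (nth_map 0) // T_on_span -!mulmxBl -map_mxB S_inv_span.
Qed.

Lemma lattice_code_of_similarity : has_lattice_code W S `|\det A|%N.
Proof.
by exists T; split; [exact: similarity_is_CO | exact: lattice_sub_img | exact: img_index].
Qed.

End Similarity.

Lemma min_norm_sqrt2 k (S : 'rV[R]_k -> Prop) l z :
  is_min_norm S l -> (forall x, S x -> x != 0 -> 2 <= dotv x x) ->
  S z -> dotv z z = 2 -> l = Num.sqrt 2.
Proof.
move=> [[x Sx [x_neq0 <-]] min_l] ge2 Sz z2.
have z_neq0 : z != 0 by rewrite -dotv_eq0 z2 pnatr_eq0.
apply/eqP; rewrite eq_le -[in X in X && _]z2 min_l //=.
by rewrite ler_sqrt ?ge2 // (le_trans _ (ge2 x Sx x_neq0)).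
Qed.

Lemma dotv_int_span k m (B : 'M[R]_(m, k)) (G : 'M[int]_m) u :
  ZR G = B *m B^T -> dotv (ZR u *m B) (ZR u *m B) = ((u *m G *m u^T) ord0 ord0)%:~R.
Proof.
move=> gramG.
by rewrite dotv_mul_tr trmx_mul map_trmx mulmxA -(mulmxA _ B) -gramG -!map_mxM mxE.
Qed.

Lemma natr_absz_sqrt_ratio (d q : int) m :
  0 < q -> d ^+ 2 * 2 ^+ m = q ^+ m ->
  `|d|%:R = (Num.sqrt q%:~R / Num.sqrt 2) ^+ m :> R.
Proof.
move=> q_gt0 dq; apply/eqP; rewrite -(@eqrXn2 _ 2) //; last first.
  by rewrite exprn_ge0 // divr_ge0 ?sqrtr_ge0.
rewrite natr_absz intr_norm real_normK ?num_real // -exprAC expr_div_n.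
rewrite !sqr_sqrtr ?ler0z ?ltW // expr_div_n.
apply/eqP/(mulIf (_ : 2 ^+ m != 0)); first by rewrite expf_neq0 ?pnatr_eq0.
rewrite divfK ?expf_neq0 ?pnatr_eq0 //.
by have := congr1 (intr : int -> R) dq; rewrite rmorphM !rmorphXn.
Qed.

Lemma lattice_code_of_norm_form k m (S W : 'rV[R]_k -> Prop) B Bp
    (G : 'M[int]_m) (A : 'rV[int]_m -> 'M[int]_m) l :
  lattice_basis S W B Bp -> ZR G = B *m B^T -> norm_multiplicative G A ->
  (forall x, S x -> x != 0 -> 2 <= dotv x x) -> (exists i, G i i = 2) ->
  is_min_norm S l -> forall z, S z -> z != 0 ->
  exists2 n : nat, n%:R = (normv z / l) ^+ m & has_lattice_code W S n.
Proof.
move=> basisB gramG multA ge2 [i Gii] min_l z Sz z_neq0.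
have [S_span B_rinv _ _] := basisB.
have -> : l = Num.sqrt 2.
  apply: (min_norm_sqrt2 min_l ge2 (_ : S (ZR (delta_mx 0 i) *m B))).
    by apply/S_span; eexists.
  by rewrite (dotv_int_span _ gramG) -rowE trmx_delta -colE !mxE Gii.
have /S_span[u z_eq] := Sz; have := ge2 _ Sz z_neq0; rewrite {z Sz z_neq0}z_eq.
rewrite /normv (dotv_int_span _ gramG); set q := (u *m G *m u^T) ord0 ord0 => q_ge2.
have q_gt0 : 0 < q by rewrite -(ltr_int R) (lt_le_trans _ q_ge2).
have G_neq0 : \det G != 0.
  by rewrite -(intr_eq0 R) -det_map_mx gramG (gram_det_neq0 B_rinv).
have detA := norm_multiplicative_det u multA G_neq0; rewrite -/q in detA.
have A_det : \det (A u) != 0.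
  apply/eqP => det0; move/eqP: detA; rewrite det0 expr0n mul0r eq_sym.
  by rewrite expf_eq0 gt_eqF // andbF.
have A_sim : ZR (A u) *m (B *m B^T) *m (ZR (A u))^T = (q%:~R / 2) *: (B *m B^T).
  apply: (@scalerI _ _ 2); first by rewrite pnatr_eq0.
  rewrite scalerA mulrC divfK ?pnatr_eq0 // -gramG.
  by have := congr1 ZR (multA u); rewrite !map_mxZ !map_mxM map_trmx.
exists `|\det (A u)|%N; first exact: natr_absz_sqrt_ratio.
by apply: (lattice_code_of_similarity basisB A_det _ A_sim); rewrite divr_gt0 ?ltr0z.
Qed.

End LatticeCodes.

(** * Vectors of squared length at least 2 *)

Lemma int_even_or_odd (n : int) : exists t, n = 2 * t \/ n = 2 * t + 1.
Proof.
exists (n %/ 2)%Z; have := divz_eq n 2; have := modz_ge0 n (isT : (2 : int) != 0).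
by have := ltz_pmod n (isT : (0 : int) < 2); lia.
Qed.

Lemma dvdz2_sqr_sub (n : int) : (2 %| n ^+ 2 - n)%Z.
Proof.
have [a [->|->]] := int_even_or_odd n.
- by apply/dvdzP; exists (2 * a ^+ 2 - a); ring.
- by apply/dvdzP; exists (2 * a ^+ 2 + a); ring.
Qed.

Lemma even_sum_sqr_ge2 k (v : 'rV[int]_k) :
  (2 %| \sum_j v ord0 j)%Z -> v != 0 -> 2 <= \sum_j v ord0 j ^+ 2.
Proof.
move=> even_sum v_neq0.
have even_sqr : (2 %| \sum_j v ord0 j ^+ 2)%Z.
  rewrite -(subrK (\sum_j v ord0 j) (\sum_j v ord0 j ^+ 2)) rpredD // -sumrB.
  by apply: rpred_sum => j _; apply: dvdz2_sqr_sub.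
have sqr_gt0 : 0 < \sum_j v ord0 j ^+ 2.
  rewrite lt_def sumr_ge0 ?andbT => [|j _]; last exact: sqr_ge0.
  apply: contra v_neq0 => /eqP sqr0; apply/eqP/rowP => j; apply/eqP.
  by rewrite mxE -sqrf_eq0; apply/eqP; apply: (psumr_eq0P _ sqr0) => // i _; apply: sqr_ge0.
by case/dvdzP: even_sqr sqr_gt0 => r ->; lia.
Qed.

Section MinimalNorms.
Variable R : realType.
Local Notation ZR := (map_mx (intr : int -> R)).

Lemma intvecP k (x : 'rV[R]_k) : intvec x <-> exists v : 'rV[int]_k, x = ZR v.
Proof.
split=> [x_int | [v ->] j]; last by rewrite mxE intr_int.
by exists (map_mx (@Num.floor R) x); apply/rowP => j; rewrite !mxE floorK.
Qed.

Lemma intvec_mulmx k m (x : 'rV[R]_k) (M : 'M[int]_(k, m)) : intvec x -> intvec (x *m ZR M).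
Proof. by move=> x_int j; rewrite mxE rpred_sum // => i _; rewrite mxE rpredM ?intr_int. Qed.

Lemma coord_sum_intr k (v : 'rV[int]_k) : coord_sum (ZR v) = (\sum_j v ord0 j)%:~R.
Proof. by rewrite rmorph_sum; apply: eq_bigr => j _; rewrite mxE. Qed.

Lemma dotv_intr k (v : 'rV[int]_k) : dotv (ZR v) (ZR v) = (\sum_j v ord0 j ^+ 2)%:~R.
Proof. by rewrite rmorph_sum; apply: eq_bigr => j _; rewrite mxE -rmorphM. Qed.

Lemma even_intvec_dotv_ge2 k (x : 'rV[R]_k) :
  intvec x -> coord_sum x / 2 \is a Num.int -> x != 0 -> 2 <= dotv x x.
Proof.
move=> /intvecP[v ->] /intrP[t]; rewrite coord_sum_intr => sum_t v_neq0.
have sum_v : \sum_j v ord0 j = 2 * t.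
  by apply: (@intr_inj R); rewrite intrM -sum_t; field.
rewrite dotv_intr -[2 : R]/(2%:~R) ler_int even_sum_sqr_ge2 ?sum_v ?dvdz_mulr //.
by apply: contraNneq v_neq0 => ->; rewrite map_mx0.
Qed.

Lemma halfvec_dotv_ge k (x : 'rV[R]_k) : halfvec x -> k%:R / 4 <= dotv x x.
Proof.
move=> x_half; rewrite -[k in k%:R]card_ord -sumr_const mulr_suml.
apply: ler_sum => i _; have /intrP[n n_eq] := x_half i.
rewrite mul1r (_ : x ord0 i = n%:~R + 2^-1); last by rewrite -n_eq subrK.
have : 0 <= n%:~R ^+ 2 + n%:~R :> R by rewrite -rmorphXn -rmorphD ler0z; nia.
by lra.
Qed.

Lemma intvec_or_halfvec_subr k (x : 'rV[R]_k) i j :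
  intvec x \/ halfvec x -> x ord0 i - x ord0 j \is a Num.int.
Proof.
case=> [x_int | x_half]; first by rewrite rpredB ?x_int.
have -> : x ord0 i - x ord0 j = (x ord0 i - 2^-1) - (x ord0 j - 2^-1) by ring.
by rewrite rpredB ?x_half.
Qed.

Lemma intvec_or_halfvec_mul2 k (x : 'rV[R]_k) i :
  intvec x \/ halfvec x -> 2 * x ord0 i \is a Num.int.
Proof.
case=> [x_int | x_half]; first by rewrite rpredM ?natr_int ?x_int.
have -> : 2 * x ord0 i = 2 * (x ord0 i - 2^-1) + 1 by field.
by rewrite rpredD ?rpredM ?natr_int ?x_half ?rpred1.
Qed.

End MinimalNorms.

(** * The four lattices *)

(* Concrete matrices are given by their entries as functions of [nat]
   indices, and [nsum] unfolds by computation: after case analysis on the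
   indices an identity between such matrices is an identity of polynomials. *)
Definition mxn (T : Type) m n (f : nat -> nat -> T) : 'M[T]_(m, n) :=
  \matrix_(i, j) f i j.

Fixpoint nsum (T : nmodType) (n : nat) (F : nat -> T) : T :=
  if n is n'.+1 then nsum n' F + F n' else 0.

Lemma nsumE (T : nmodType) n (F : nat -> T) : \sum_(k < n) F k = nsum n F.
Proof. by elim: n => [|n IH]; rewrite ?big_ord0 // big_ord_recr /= IH. Qed.

Lemma mxn_mul (T : pzRingType) m n p (f g : nat -> nat -> T) :
  mxn m n f *m mxn n p g = mxn m p (fun i j => nsum n (fun k => f i k * g k j)).
Proof.
by apply/matrixP => i j; rewrite !mxE -nsumE; apply: eq_bigr => k _; rewrite !mxE.
Qed.

Lemma mxn_tr (T : Type) m n (f : nat -> nat -> T) :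
  (mxn m n f)^T = mxn n m (fun i j => f j i).
Proof. by apply/matrixP => i j; rewrite !mxE. Qed.

Lemma mxn_scale (T : pzRingType) m n a (f : nat -> nat -> T) :
  a *: mxn m n f = mxn m n (fun i j => a * f i j).
Proof. by apply/matrixP => i j; rewrite !mxE. Qed.

Lemma map_mxn (T U : Type) (h : T -> U) m n (f : nat -> nat -> T) :
  map_mx h (mxn m n f) = mxn m n (fun i j => h (f i j)).
Proof. by apply/matrixP => i j; rewrite !mxE. Qed.

Lemma mxn1 (T : pzRingType) n : mxn n n (fun i j => (i == j)%:R) = 1%:M :> 'M[T]_n.
Proof. by apply/matrixP => i j; rewrite !mxE. Qed.

Lemma mxn_row (T : Type) n (x : 'rV[T]_n.+1) :
  mxn 1 n.+1 (fun _ j => x ord0 (inord j)) = x.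
Proof. by apply/rowP => j; rewrite mxE inord_val. Qed.

Lemma eq_mxn (T : Type) m n (f g : nat -> nat -> T) :
  (forall i, (i < m)%N -> forall j, (j < n)%N -> f i j = g i j) ->
  mxn m n f = mxn m n g.
Proof. by move=> fg; apply/matrixP => i j; rewrite !mxE fg. Qed.

Ltac case_index := case=> [|[|[|[|[|[|[|[|?]]]]]]]] // _.

Ltac mxn_entrywise :=
  apply: eq_mxn; case_index; case_index; cbv beta iota delta [nsum] in *; simpl in *.

Lemma norm_multiplicative_mxn m (g : nat -> nat -> int)
    (a : (nat -> int) -> nat -> nat -> int) :
  (forall w, 2 *: (mxn m.+1 m.+1 (a w) *m mxn m.+1 m.+1 g *m (mxn m.+1 m.+1 (a w))^T) =
     (mxn 1 m.+1 (fun _ => w) *m mxn m.+1 m.+1 g *m (mxn 1 m.+1 (fun _ => w))^T) ord0 ord0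
       *: mxn m.+1 m.+1 g) ->
  norm_multiplicative (mxn m.+1 m.+1 g)
    (fun u => mxn m.+1 m.+1 (a (fun j => u ord0 (inord j)))).
Proof. by move=> a_mult u; rewrite a_mult mxn_row. Qed.

Section Lattices.
Variable R : realType.
Local Notation ZR := (map_mx (intr : int -> R)).

Lemma coord_sum_mxn k (f : nat -> nat -> R) : coord_sum (mxn 1 k f) = nsum k (f 0%N).
Proof. by rewrite /coord_sum -nsumE; apply: eq_bigr => j _; rewrite mxE. Qed.

Lemma full_lattice_basis k (S : 'rV[R]_k -> Prop) (B Bp : 'M[R]_k) :
  B *m Bp = 1%:M -> (forall x, S x -> intvec (x *m Bp)) -> (forall u, S (ZR u *m B)) ->
  lattice_basis S (fun _ => True) B Bp.
Proof.
move=> BBp coord_int span_S; have BpB := mulmx1C BBp.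
split=> // [x | x _]; last by rewrite -mulmxA BpB mulmx1.
split=> [/coord_int/intvecP[v xBp] | [u ->] //].
by exists v; rewrite -xBp -mulmxA BpB mulmx1.
Qed.

Lemma An_lattice_basis k m (b : 'M[int]_(m, k)) (b' : 'M[int]_(k, m)) :
  b *m b' = 1%:M -> (forall y, coord_sum (y *m ZR b) = 0) ->
  (forall x, coord_sum x = 0 -> x *m ZR b' *m ZR b = x) ->
  lattice_basis (@An_set R k) (fun x => coord_sum x = 0) (ZR b) (ZR b').
Proof.
move=> bb' sum_b proj; split=> //; last by rewrite -map_mxM bb' map_mx1.
move=> x; split.
- case=> /(intvec_mulmx b') /intvecP[v xb'] /proj x_eq.
  by exists v; rewrite -xb'.
- case=> u ->; split; last exact: sum_b.
  by rewrite -map_mxM; apply/intvecP; eexists.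
Qed.

Definition A1_basis (i j : nat) : int := if j is 0 then 1 else -1.
Definition A1_coord (i j : nat) : int := if i is 0 then 1 else 0.
Definition A1_gram (i j : nat) : int := 2.
Definition A1_mul (w : nat -> int) (i j : nat) : int := w 0%N.

Lemma A1_lattice_basis : lattice_basis (@An_set R 2) (fun x => coord_sum x = 0)
  (ZR (mxn 1 2 A1_basis)) (ZR (mxn 2 1 A1_coord)).
Proof.
apply: An_lattice_basis.
- by rewrite -mxn1 mxn_mul; mxn_entrywise.
- by move=> y; rewrite -[y]mxn_row !map_mxn mxn_mul coord_sum_mxn /=; ring.
- move=> x; rewrite -[x]mxn_row coord_sum_mxn !map_mxn !mxn_mul => sum0.
  by mxn_entrywise; lra.
Qed.

Lemma A1_gramE : ZR (mxn 1 1 A1_gram) = ZR (mxn 1 2 A1_basis) *m (ZR (mxn 1 2 A1_basis))^T.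
Proof. by rewrite !map_mxn mxn_tr mxn_mul; mxn_entrywise; ring. Qed.

Lemma A1_norm_multiplicative : norm_multiplicative (mxn 1 1 A1_gram)
  (fun u => mxn 1 1 (A1_mul (fun j => u ord0 (inord j)))).
Proof.
apply: norm_multiplicative_mxn => w; rewrite !mxn_tr !mxn_mul mxE !mxn_scale /A1_mul /A1_gram.
by mxn_entrywise; ring.
Qed.

Definition A2_basis (i j : nat) : int :=
  match i, j with 0, 0 | 1, 1 => 1 | 0, 1 | 1, 2 => -1 | _, _ => 0 end.
Definition A2_coord (i j : nat) : int :=
  match i, j with 0, 0 => 1 | 2, 1 => -1 | _, _ => 0 end.
Definition A2_gram (i j : nat) : int := if i == j then 2 else -1.
Definition A2_mul (w : nat -> int) (i j : nat) : int :=
  match i, j with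
  | 0, 0 => w 0%N | 0, 1 => w 1%N | 1, 0 => - w 1%N | 1, 1 => w 0%N - w 1%N | _, _ => 0
  end.

Lemma A2_lattice_basis : lattice_basis (@An_set R 3) (fun x => coord_sum x = 0)
  (ZR (mxn 2 3 A2_basis)) (ZR (mxn 3 2 A2_coord)).
Proof.
apply: An_lattice_basis.
- by rewrite -mxn1 mxn_mul; mxn_entrywise.
- by move=> y; rewrite -[y]mxn_row !map_mxn mxn_mul coord_sum_mxn /=; ring.
- move=> x; rewrite -[x]mxn_row coord_sum_mxn !map_mxn !mxn_mul => sum0.
  by mxn_entrywise; lra.
Qed.

Lemma A2_gramE : ZR (mxn 2 2 A2_gram) = ZR (mxn 2 3 A2_basis) *m (ZR (mxn 2 3 A2_basis))^T.
Proof. by rewrite !map_mxn mxn_tr mxn_mul /A2_gram; mxn_entrywise; ring. Qed.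

Lemma A2_norm_multiplicative : norm_multiplicative (mxn 2 2 A2_gram)
  (fun u => mxn 2 2 (A2_mul (fun j => u ord0 (inord j)))).
Proof.
apply: norm_multiplicative_mxn => w; rewrite !mxn_tr !mxn_mul mxE !mxn_scale /A2_gram.
by mxn_entrywise; ring.
Qed.

Definition Dn_basis (i j : nat) : int :=
  if i is 0 then (if j is 0 then 2 else 0)
  else if j == i then 1 else if j is 0 then -1 else 0.
Definition Dn_gram (i j : nat) : int :=
  if i == j then (if i is 0 then 4 else 2) else if (i == 0) || (j == 0) then -2 else 1.
Definition D4_coord (i j : nat) : R := if j is 0 then 2^-1 else (i == j)%:R.

(* Multiplication tables of the Hurwitz quaternions and of the integral
   octonions in the bases [Dn_basis] and [E8_basis]; in both the unit is the
   vector (1, 1, 0, ..., 0), the sum of the first two basis vectors. *)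
Definition D4_mul (w : nat -> int) (i j : nat) : int :=
  match i, j with
  | 0, 0 => w 1 + w 3
  | 0, 1 => - 2 * w 0 + 2 * w 1 + w 2 + w 3
  | 0, 2 => w 2 + w 3
  | 0, 3 => - w 2 + w 3
  | 1, 0 => w 0 - w 1 - w 3
  | 1, 1 => 2 * w 0 - w 1 - w 2 - w 3
  | 1, 2 => - w 3
  | 1, 3 => w 2
  | 2, 0 => w 0 - w 1 - w 2 - w 3
  | 2, 1 => w 0 - w 1 - w 2
  | 2, 2 => w 0 - w 2 - w 3
  | 2, 3 => w 0 - w 1 - w 3
  | 3, 0 => - w 3
  | 3, 1 => w 0 - w 1 - w 2 - w 3
  | 3, 2 => - w 0 + w 1
  | 3, 3 => w 0 - w 3
  | _, _ => 0 end.

Lemma intvec_mxn k (f : nat -> R) :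
  (forall j, (j < k)%N -> f j \is a Num.int) -> intvec (mxn 1 k (fun _ => f)).
Proof. by move=> f_int j; rewrite mxE f_int. Qed.

Lemma D4_lattice_basis : lattice_basis (@D4_set R) (fun _ => True)
  (ZR (mxn 4 4 Dn_basis)) (mxn 4 4 D4_coord).
Proof.
have BBp : ZR (mxn 4 4 Dn_basis) *m mxn 4 4 D4_coord = 1%:M.
  by rewrite map_mxn -mxn1 mxn_mul /D4_coord; mxn_entrywise; field.
apply: (full_lattice_basis BBp) => [x [x_int sum_int] | u].
  have -> : x *m mxn 4 4 D4_coord =
      mxn 1 4 (fun _ j => if j is 0 then coord_sum x / 2 else x ord0 (inord j)).
    by rewrite -[X in X *m _]mxn_row -[X in coord_sum X]mxn_row coord_sum_mxn mxn_mul;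
      mxn_entrywise; field.
  by apply: intvec_mxn => -[|j] _.
split; first by rewrite -map_mxM; apply/intvecP; eexists.
rewrite -[u]mxn_row !map_mxn mxn_mul coord_sum_mxn; apply/intrP.
by exists (u ord0 (inord 0)); cbv beta iota delta [nsum]; simpl; field.
Qed.

Lemma D4_gramE : ZR (mxn 4 4 Dn_gram) = ZR (mxn 4 4 Dn_basis) *m (ZR (mxn 4 4 Dn_basis))^T.
Proof. by rewrite !map_mxn mxn_tr mxn_mul /Dn_gram; mxn_entrywise; ring. Qed.

Lemma D4_norm_multiplicative : norm_multiplicative (mxn 4 4 Dn_gram)
  (fun u => mxn 4 4 (D4_mul (fun j => u ord0 (inord j)))).
Proof.
apply: norm_multiplicative_mxn => w; rewrite !mxn_tr !mxn_mul mxE !mxn_scale /Dn_gram.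
by mxn_entrywise; ring.
Qed.

Definition E8_basis (i j : nat) : R := if i is 7 then 2^-1 else (Dn_basis i j)%:~R.
Definition E8_coord (i j : nat) : R :=
  match j with
  | 0 => if i is 7 then - (7 / 2) else 2^-1
  | 7 => if i is 7 then 2 else 0
  | _ => if i == j then 1 else if i is 7 then -1 else 0
  end.
Definition E8_gram (i j : nat) : int :=
  if (i == 7) || (j == 7) then (if i == j then 2 else if (i == 0) || (j == 0) then 1 else 0)
  else Dn_gram i j.

Definition E8_mul (w : nat -> int) (i j : nat) : int :=
  match i, j with
  | 0, 0 => w 1 + w 3 + w 5 + 4 * w 6 + 2 * w 7
  | 0, 1 => - 2 * w 0 + 2 * w 1 + w 2 + w 3 + w 4 + w 5 + 2 * w 6
  | 0, 2 => w 2 + w 3 + w 6 + w 7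
  | 0, 3 => - w 2 + w 3 + w 6
  | 0, 4 => w 4 + w 5 + w 6 + w 7
  | 0, 5 => - w 4 + w 5 + w 6
  | 0, 6 => 2 * w 6 + w 7
  | 0, 7 => - 2 * w 6
  | 1, 0 => w 0 - w 1 - w 3 - w 5 - 4 * w 6 - 2 * w 7
  | 1, 1 => 2 * w 0 - w 1 - w 2 - w 3 - w 4 - w 5 - 2 * w 6
  | 1, 2 => - w 3 - w 6 - w 7
  | 1, 3 => w 2 - w 6
  | 1, 4 => - w 5 - w 6 - w 7
  | 1, 5 => w 4 - w 6
  | 1, 6 => - w 6 - w 7
  | 1, 7 => 2 * w 6 + w 7
  | 2, 0 => w 0 - w 1 - w 2 - w 3 - 2 * w 4 + w 5 - 3 * w 6 - w 7
  | 2, 1 => w 0 - w 1 - w 2 - w 4 - w 6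
  | 2, 2 => w 0 - w 2 - w 3 - w 4 - w 6
  | 2, 3 => w 0 - w 1 - w 3 - w 4 - w 6
  | 2, 4 => - w 4 - w 6 - w 7
  | 2, 5 => - w 6
  | 2, 6 => w 5 - w 6
  | 2, 7 => w 4 - w 5 + w 6
  | 3, 0 => - w 3 + 2 * w 4 + w 5 - 2 * w 6 + w 7
  | 3, 1 => w 0 - w 1 - w 2 - w 3 - w 6
  | 3, 2 => - w 0 + w 1 + w 4 + w 5
  | 3, 3 => w 0 - w 3 - w 6 + w 7
  | 3, 4 => - w 6
  | 3, 5 => w 4 + w 7
  | 3, 6 => w 4 - w 6
  | 3, 7 => - w 4 - w 5 + w 6 - w 7
  | 4, 0 => w 0 - w 1 + w 2 - 3 * w 3 - w 4 - w 5 - 2 * w 6 - w 7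
  | 4, 1 => w 0 - w 1 - w 3 - w 4 - w 6
  | 4, 2 => - w 3
  | 4, 3 => w 2 - w 3
  | 4, 4 => w 0 - w 3 - w 4 - w 5 - w 6
  | 4, 5 => w 0 - w 1 - w 3 - w 5 - w 6
  | 4, 6 => - w 3 - w 6 - w 7
  | 4, 7 => - w 2 + w 3 + w 6
  | 5, 0 => - 2 * w 2 - 2 * w 3 - w 5 - 2 * w 6 - 3 * w 7
  | 5, 1 => w 0 - w 1 - w 2 - w 3 - w 4 - w 5 - w 6 - w 7
  | 5, 2 => - w 2 - w 3 - w 7
  | 5, 3 => - w 3 - w 6 - w 7
  | 5, 4 => - w 0 + w 1 - w 7
  | 5, 5 => w 0 - w 2 - w 3 - w 5 - w 6
  | 5, 6 => - w 2 - w 6 - w 7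
  | 5, 7 => w 2 + w 3 + w 6 + w 7
  | 6, 0 => - 3 * w 0 + 3 * w 1 + 2 * w 2 + w 3 + w 4 + w 5 - w 6 - w 7
  | 6, 1 => - w 6
  | 6, 2 => - w 0 + w 1 - w 7
  | 6, 3 => - w 0 + w 1 + w 2 + w 5
  | 6, 4 => - w 0 + w 1 + w 2 + w 3
  | 6, 5 => - w 0 + w 1 + w 2 + w 4
  | 6, 6 => w 1 - w 6
  | 6, 7 => 2 * w 0 - 2 * w 1 - w 2 - w 3 - w 4 - w 5
  | 7, 0 => - 2 * w 0 + 2 * w 1 + w 2 - w 3 + w 4 + 3 * w 5 + w 6 - w 7
  | 7, 1 => - w 0 + w 1 + w 5 - w 7
  | 7, 2 => - w 0 + w 1 + w 2 + w 5 + w 6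
  | 7, 3 => w 5
  | 7, 4 => - w 0 + w 1 + w 2 + w 4 + w 5
  | 7, 5 => - w 3 + w 5
  | 7, 6 => - w 0 + w 1 + w 4 + w 5 + w 6
  | 7, 7 => 2 * w 0 - w 1 - w 2 - w 4 - 2 * w 5 - w 6 + w 7
  | _, _ => 0 end.

Lemma E8_basis_rinv : mxn 8 8 E8_basis *m mxn 8 8 E8_coord = 1%:M :> 'M[R]_8.
Proof. by rewrite -mxn1 mxn_mul /E8_basis; mxn_entrywise; field. Qed.

Lemma E8_coord_int (x : 'rV[R]_8) : E8_set x -> intvec (x *m mxn 8 8 E8_coord).
Proof.
case=> x_int_half sum_int.
have -> : x *m mxn 8 8 E8_coord = mxn 1 8 (fun _ j =>
    if j is 0 then coord_sum x / 2 - 2 * (2 * x ord0 (inord 7))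
    else if j is 7 then 2 * x ord0 (inord 7) else x ord0 (inord j) - x ord0 (inord 7)).
  rewrite -[X in X *m _]mxn_row -[X in coord_sum X]mxn_row coord_sum_mxn mxn_mul.
  by mxn_entrywise; field.
apply: intvec_mxn => -[|[|[|[|[|[|[|[|j]]]]]]]] _ //=;
  try exact: intvec_or_halfvec_subr; try exact: intvec_or_halfvec_mul2.
by rewrite rpredB // rpredM ?natr_int // intvec_or_halfvec_mul2.
Qed.

Lemma E8_sum_span (u : 'rV[int]_8) :
  coord_sum (ZR u *m mxn 8 8 E8_basis) / 2 = (u ord0 (inord 0) + 2 * u ord0 (inord 7))%:~R.
Proof.
rewrite -[X in ZR X]mxn_row map_mxn mxn_mul coord_sum_mxn /E8_basis.
by cbv beta iota delta [nsum]; simpl; field.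
Qed.

Lemma E8_set_span (u : 'rV[int]_8) : E8_set (ZR u *m mxn 8 8 E8_basis).
Proof.
split; last by rewrite E8_sum_span intr_int.
pose v := u *m mxn 8 8 (fun i j => if i is 7 then 0 else Dn_basis i j).
have uB j : (ZR u *m mxn 8 8 E8_basis) ord0 j = (v ord0 j)%:~R + (u ord0 (inord 7))%:~R / 2.
  rewrite -[X in ZR X]mxn_row map_mxn mxn_mul.
  rewrite /v -[X in X *m _]mxn_row mxn_mul !mxE /E8_basis.
  by case: j => -[|[|[|[|[|[|[|[|j]]]]]]]] //= _; field.
have [t [u7|u7]] := int_even_or_odd (u ord0 (inord 7)); [left | right] => j; rewrite uB u7.
- have -> : (2 * t)%:~R / 2 = t%:~R :> R by rewrite intrM; field.
  by rewrite rpredD ?intr_int.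
- rewrite -addrA; have -> : (2 * t + 1)%:~R / 2 - 2^-1 = t%:~R :> R.
    by rewrite intrD intrM; field.
  by rewrite rpredD ?intr_int.
Qed.

Lemma E8_lattice_basis : lattice_basis (@E8_set R) (fun _ => True)
  (mxn 8 8 E8_basis) (mxn 8 8 E8_coord).
Proof.
exact: (full_lattice_basis E8_basis_rinv E8_coord_int E8_set_span).
Qed.

Lemma E8_gramE : ZR (mxn 8 8 E8_gram) = mxn 8 8 E8_basis *m (mxn 8 8 E8_basis)^T.
Proof.
by rewrite map_mxn mxn_tr mxn_mul /E8_gram /Dn_gram /E8_basis; mxn_entrywise; field.
Qed.

Lemma E8_norm_multiplicative : norm_multiplicative (mxn 8 8 E8_gram)
  (fun u => mxn 8 8 (E8_mul (fun j => u ord0 (inord j)))).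
Proof.
apply: norm_multiplicative_mxn => w; rewrite !mxn_tr !mxn_mul mxE !mxn_scale /E8_gram /Dn_gram.
by mxn_entrywise; ring.
Qed.

End Lattices.

Lemma lat_dotv_ge2 (R : realType) L (x : 'rV[R]_(amb L)) :
  lat_set x -> x != 0 -> 2 <= dotv x x.
Proof.
case: L x => x /=.
- by case=> x_int sum0; apply: even_intvec_dotv_ge2; rewrite // sum0 mul0r rpred0.
- by case=> x_int sum0; apply: even_intvec_dotv_ge2; rewrite // sum0 mul0r rpred0.
- by case; apply: even_intvec_dotv_ge2.
- case=> [[x_int | x_half] sum_int] x_neq0; first exact: even_intvec_dotv_ge2.
  by have := halfvec_dotv_ge x_half; lra.
Qed.

Unset Implicit Arguments.

Theorem lemma4p8 (R : realType) (L : lat) (l : R) :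
  is_min_norm (@lat_set R L) l ->
  forall z : 'rV[R]_(amb L), lat_set z -> z != 0 ->
  exists2 n : nat, (n%:R : R) = (normv z / l) ^+ ldim L &
    has_lattice_code (@lat_space R L) (@lat_set R L) n.
Proof.
move=> min_l; have ge2 := @lat_dotv_ge2 R L.
case: L l min_l ge2 => l min_l ge2; [
  apply: (lattice_code_of_norm_form (A1_lattice_basis R) (A1_gramE R)
    A1_norm_multiplicative ge2 _ min_l) |
  apply: (lattice_code_of_norm_form (A2_lattice_basis R) (A2_gramE R)
    A2_norm_multiplicative ge2 _ min_l) |
  apply: (lattice_code_of_norm_form (D4_lattice_basis R) (D4_gramE R)
    D4_norm_multiplicative ge2 _ min_l) |
  apply: (lattice_code_of_norm_form (E8_lattice_basis R) (E8_gramE R)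
    E8_norm_multiplicative ge2 _ min_l) ];
by exists ord_max; rewrite mxE.
Qed.
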